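(* Let $\mathcal G=(\mathcal V,\mathcal E)$ be a finite undirected graph with finite label sets $\mathcal X_v$ and costs $\theta$ (unary $\theta_u$, pairwise $\theta_{uv}$). Let $\mathcal A,\mathcal B$ be a partition of $\mathcal G$, and let $\mathcal A'$ be an induced subgraph of $\mathcal G$ such that $\mathcal B$ is boundary complement to $\mathcal A'$ with respect to $\mathcal G$, and suppose $\mathcal V_{\mathcal A}\subseteq\mathcal V_{\mathcal A'}\subseteq\mathrm{SAC}(\theta)$. Let $x'\in\arg\min_{x\in\mathcal X_{\mathcal V_{\mathcal A'}}}E_{\mathcal A'}(\theta,x)$ and $x''\in\arg\min_{x\in\mathcal X_{\mathcal V_{\mathcal B}}}E_{\mathcal B}(\theta,x)$. If $x'_v=x''_v$ for all $v\in\mathcal V_{\partial\mathcal A'}$, then, writing $x'_{\mathcal A}$ for the restriction of $x'$ to $\mathcal V_{\mathcal A}$: $x'_{\mathcal A}\in\arg\min_{x\in\mathcal X_{\mathcal V_{\mathcal A}}}E_{\mathcal A}(\theta,x)$, and for every edge $uv\in\mathcal E$ with $u\in\mathcal V_{\mathcal A}$, $v\in\mathcal V_{\mathcal B}$ it holds that $(x'_u,x''_v)\in\arg\min_{(s,t)\in\mathcal X_u\times\mathcal X_v}\theta_{uv}(s,t)$.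
   Context: For $\mathcal V'\subseteq\mathcal V$, $\mathcal X_{\mathcal V'}=\prod_{v\in\mathcal V'}\mathcal X_v$. A subgraph induced by $\mathcal V'$ contains all edges of $\mathcal G$ between nodes of $\mathcal V'$; a partition $\mathcal A,\mathcal B$ of $\mathcal G$ consists of the subgraphs induced by two disjoint node sets covering $\mathcal V$. For a subgraph $\mathcal H$, $E_{\mathcal H}(\theta,x)=\sum_{u\in\mathcal V_{\mathcal H}}\theta_u(x_u)+\sum_{uv\in\mathcal E_{\mathcal H}}\theta_{uv}(x_u,x_v)$. For an induced subgraph $\mathcal A'$, $\mathcal V_{\partial\mathcal A'}=\{v\in\mathcal V_{\mathcal A'}\mid\exists uv\in\mathcal E: u\in\mathcal V\setminus\mathcal V_{\mathcal A'}\}$, and a subgraph is boundary complement to $\mathcal A'$ w.r.t. $\mathcal G$ if it is the subgraph induced by $(\mathcal V\setminus\mathcal V_{\mathcal A'})\cup\mathcal V_{\partial\mathcal A'}$. A node $u$ is strictly arc-consistent w.r.t. $\theta$ if there exist a label $x_u\in\mathcal X_u$ and labels $x_v\in\mathcal X_v$ for all neighbours $v$ of $u$ such that $\theta_u(x_u)<\theta_u(s)$ for all $s\ne x_u$ and $\theta_{uv}(x_u,x_v)<\theta_{uv}(s,t)$ for all $(s,t)\ne(x_u,x_v)$; $\mathrm{SAC}(\theta)$ denotes the set of strictly arc-consistent nodes. *)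

From mathcomp Require Import all_boot all_order all_algebra.
Set Implicit Arguments. Unset Strict Implicit. Unset Printing Implicit Defensive.
Import Order.TTheory GRing.Theory Num.Theory.
Local Open Scope ring_scope.

(* Encoding:
   - nodes: V : finType; edges: an edge type Ed : finType with endpoints
     src e, dst e (each undirected edge is stored once, with an arbitrary
     orientation); simple graph = no loops, no parallel edges.
   - labels: all label sets X v are subsets of a common finite type L;
     a labeling of a node set S is any x : V -> L with x v \in X v on S
     (values outside S are irrelevant).
   - costs: unary thu v : L -> R, pairwise thp e : L -> L -> R, where
     thp e s t is theta_{uv}(s,t) for u = src e, v = dst e. *)

Section Defs.
Variables (R : realDomainType) (V L Ed : finType).
Variables (src dst : Ed -> V) (X : V -> {set L}).
Variables (thu : V -> L -> R) (thp : Ed -> L -> L -> R).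

Definition simple_graph : Prop :=
  (forall e, src e != dst e) /\
  (forall e1 e2, ((src e1 == src e2) && (dst e1 == dst e2)) ||
                 ((src e1 == dst e2) && (dst e1 == src e2)) -> e1 = e2).

Definition labeling_on (S : {set V}) (x : V -> L) : Prop :=
  forall v, v \in S -> x v \in X v.

Definition energy (S : {set V}) (x : V -> L) : R :=
  \sum_(u in S) thu u (x u) +
  \sum_(e : Ed | (src e \in S) && (dst e \in S)) thp e (x (src e)) (x (dst e)).

Definition is_argmin (S : {set V}) (x : V -> L) : Prop :=
  labeling_on S x /\
  forall y, labeling_on S y -> energy S x <= energy S y.

Definition boundary (S : {set V}) : {set V} :=
  [set v in S | [exists e : Ed,
     ((src e == v) && (dst e \notin S)) || ((dst e == v) && (src e \notin S))]].

Definition boundary_complement (S : {set V}) : {set V} :=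
  (~: S) :|: boundary S.

Definition strictly_arc_consistent (u : V) : Prop :=
  exists y : V -> L,
    [/\ y u \in X u,
        (forall s, s \in X u -> s != y u -> thu u (y u) < thu u s) &
        (forall e, (src e == u) || (dst e == u) ->
           [/\ y (src e) \in X (src e), y (dst e) \in X (dst e) &
               forall s t, s \in X (src e) -> t \in X (dst e) ->
                 (s, t) != (y (src e), y (dst e)) ->
                 thp e (y (src e)) (y (dst e)) < thp e s t])].

Definition is_argmin_pair (e : Ed) (s0 t0 : L) : Prop :=
  [/\ s0 \in X (src e), t0 \in X (dst e) &
      forall s t, s \in X (src e) -> t \in X (dst e) ->
        thp e s0 t0 <= thp e s t].

End Defs.

From mathcomp Require Import all_boot all_order all_algebra.
Set Implicit Arguments. Unset Strict Implicit. Unset Printing Implicit Defensive.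
Import Order.TTheory GRing.Theory Num.Theory.
Local Open Scope ring_scope.

(* Two strictly arc-consistent endpoints of an edge certify the same strict
   minimiser of its pairwise cost, so the certificates of the nodes of A' glue
   into one labeling z that strictly minimises every unary term and every
   pairwise term of E_A'.  Such a z beats any labeling that differs from it on
   A', hence x' = z on A'; therefore x' minimises every term of E_A, and on an
   edge from A to B the far endpoint lies on the boundary of A', where x''
   agrees with x'. *)

Section TermwiseMinimal.
Variables (R : realDomainType) (V L Ed : finType).
Variables (src dst : Ed -> V) (X : V -> {set L}).
Variables (thu : V -> L -> R) (thp : Ed -> L -> L -> R).

Definition strict_argmin_unary (u : V) (s0 : L) : Prop :=
  s0 \in X u /\ forall s, s \in X u -> s != s0 -> thu u s0 < thu u s.

Definition strict_argmin_pair (e : Ed) (s0 t0 : L) : Prop :=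
  [/\ s0 \in X (src e), t0 \in X (dst e) &
      forall s t, s \in X (src e) -> t \in X (dst e) ->
        (s, t) != (s0, t0) -> thp e s0 t0 < thp e s t].

Lemma strict_argmin_unary_le (u : V) (s0 s : L) :
  strict_argmin_unary u s0 -> s \in X u -> thu u s0 <= thu u s.
Proof.
move=> [_ min_s0] Xs; have [-> // | ne] := eqVneq s s0.
exact/ltW/min_s0.
Qed.

Lemma strict_argmin_pairW (e : Ed) (s0 t0 : L) :
  strict_argmin_pair e s0 t0 -> is_argmin_pair src dst X thp e s0 t0.
Proof.
move=> [Xs0 Xt0 min_st0]; split=> // s t Xs Xt.
have [[-> ->] // | ne] := eqVneq (s, t) (s0, t0).
exact/ltW/min_st0.
Qed.

Lemma strict_argmin_pair_unique (e : Ed) (s1 t1 s2 t2 : L) :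
  strict_argmin_pair e s1 t1 -> strict_argmin_pair e s2 t2 -> (s1, t1) = (s2, t2).
Proof.
move=> [Xs1 Xt1 min1] [Xs2 Xt2 min2]; apply/eqP/negPn/negP => ne.
have ne' : (s2, t2) != (s1, t1) by rewrite eq_sym.
by have := lt_trans (min1 _ _ Xs2 Xt2 ne') (min2 _ _ Xs1 Xt1 ne); rewrite ltxx.
Qed.

Lemma strictly_arc_consistent_witness (u : V) :
  strictly_arc_consistent src dst X thu thp u ->
  exists y : V -> L, strict_argmin_unary u (y u) /\
    forall e, (src e == u) || (dst e == u) ->
      strict_argmin_pair e (y (src e)) (y (dst e)).
Proof. by move=> [y [? ? ?]]; exists y. Qed.

Definition termwise_minimal (S : {set V}) (z : V -> L) : Prop :=
  (forall u, u \in S -> strict_argmin_unary u (z u)) /\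
  (forall e, src e \in S -> dst e \in S ->
     strict_argmin_pair e (z (src e)) (z (dst e))).

Lemma termwise_minimal_subset (S S' : {set V}) (z : V -> L) :
  S' \subset S -> termwise_minimal S z -> termwise_minimal S' z.
Proof.
move=> /subsetP sS'S [min_u min_e]; split=> [u /sS'S | e /sS'S + /sS'S].
  exact: min_u.
exact: min_e.
Qed.

Lemma termwise_minimal_eq_in (S : {set V}) (z x : V -> L) :
  {in S, x =1 z} -> termwise_minimal S z -> termwise_minimal S x.
Proof.
move=> xz [min_u min_e]; split=> [u Su | e Ss Sd]; first by rewrite xz //; exact: min_u.
by rewrite !xz //; exact: min_e.
Qed.

Lemma sac_termwise_minimal (S : {set V}) (x0 : V -> L) :
  (forall u, u \in S -> strictly_arc_consistent src dst X thu thp u) ->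
  exists2 z, termwise_minimal S z & {in ~: S, z =1 x0}.
Proof.
move=> sacS.
have witness v : exists y : V -> L, v \in S ->
    strict_argmin_unary v (y v) /\
    forall e, (src e == v) || (dst e == v) ->
      strict_argmin_pair e (y (src e)) (y (dst e)).
  have [Sv | nSv] := boolP (v \in S); last by exists x0.
  by have [y Hy] := strictly_arc_consistent_witness (sacS v Sv); exists y.
have [Y HY] := fin_all_exists witness.
exists (fun v => if v \in S then Y v v else x0 v); last first.
  by move=> v; rewrite inE => /negPf ->.
split=> [u Su | e Ss Sd]; first by rewrite Su; case: (HY u Su).
rewrite Ss Sd.
have pair_s := (HY _ Ss).2 e ltac:(by rewrite eqxx).
have pair_d := (HY _ Sd).2 e ltac:(by rewrite eqxx orbT).
by case: (strict_argmin_pair_unique pair_s pair_d) => _ <-.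
Qed.

Lemma termwise_minimal_labeling (S : {set V}) (z : V -> L) :
  termwise_minimal S z -> labeling_on X S z.
Proof. by move=> [min_u _] u /min_u []. Qed.

Lemma termwise_minimal_energy_le (S : {set V}) (z y : V -> L) :
  termwise_minimal S z -> labeling_on X S y ->
  energy src dst thu thp S z <= energy src dst thu thp S y.
Proof.
move=> [min_u min_e] laby; apply: lerD.
  by apply: ler_sum => u Su; exact: strict_argmin_unary_le (min_u u Su) (laby u Su).
apply: ler_sum => e /andP [Ss Sd].
have [_ _ le_e] := strict_argmin_pairW (min_e e Ss Sd).
exact: le_e (laby _ Ss) (laby _ Sd).
Qed.

Lemma termwise_minimal_is_argmin (S : {set V}) (z : V -> L) :
  termwise_minimal S z -> is_argmin src dst X thu thp S z.
Proof.
move=> minz; split; first exact: termwise_minimal_labeling.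
by move=> y; exact: termwise_minimal_energy_le.
Qed.

Lemma termwise_minimal_energy_lt (S : {set V}) (z y : V -> L) (v : V) :
  termwise_minimal S z -> labeling_on X S y -> v \in S -> y v != z v ->
  energy src dst thu thp S z < energy src dst thu thp S y.
Proof.
move=> [min_u min_e] laby Sv neq; apply: ltr_leD.
  rewrite (bigD1 v Sv) [X in _ < X](bigD1 v Sv) /=.
  apply: ltr_leD; first by case: (min_u v Sv) => _; apply; [exact: laby|].
  apply: ler_sum => u /andP [Su _].
  exact: strict_argmin_unary_le (min_u u Su) (laby u Su).
apply: ler_sum => e /andP [Ss Sd].
have [_ _ le_e] := strict_argmin_pairW (min_e e Ss Sd).
exact: le_e (laby _ Ss) (laby _ Sd).
Qed.

Lemma argmin_eq_termwise_minimal (S : {set V}) (z x : V -> L) :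
  termwise_minimal S z -> is_argmin src dst X thu thp S x -> {in S, x =1 z}.
Proof.
move=> minz [labx minx] v Sv; apply/eqP/negPn/negP => neq.
have := minx z (termwise_minimal_labeling minz).
by rewrite leNgt (termwise_minimal_energy_lt minz labx Sv neq).
Qed.

Lemma sac_argmin_termwise_minimal (S : {set V}) (x : V -> L) :
  (forall u, u \in S -> strictly_arc_consistent src dst X thu thp u) ->
  is_argmin src dst X thu thp S x -> termwise_minimal S x.
Proof.
move=> sacS argx; have [z minz _] := sac_termwise_minimal x sacS.
exact: termwise_minimal_eq_in (argmin_eq_termwise_minimal minz argx) minz.
Qed.

End TermwiseMinimal.

Section Boundary.
Variables (V Ed : finType) (src dst : Ed -> V).

Definition joins (e : Ed) (u v : V) : bool :=
  ((src e == u) && (dst e == v)) || ((src e == v) && (dst e == u)).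

Lemma joinsC (e : Ed) (u v : V) : joins e u v = joins e v u.
Proof. by rewrite /joins orbC. Qed.

Lemma joins_src_dst (e : Ed) : joins e (src e) (dst e).
Proof. by rewrite /joins !eqxx. Qed.

Lemma joins_boundary (S : {set V}) (e : Ed) (u v : V) :
  joins e u v -> u \in S -> v \notin S -> u \in boundary src dst S.
Proof.
move=> /orP [] /andP [/eqP su /eqP dv] Su nSv; rewrite inE Su /=; apply/existsP.
  by exists e; rewrite su dv eqxx nSv.
by exists e; rewrite su dv eqxx nSv orbT.
Qed.

Lemma joins_cross_boundary (S A : {set V}) (e : Ed) (u v : V) :
  A \subset S -> [disjoint A & boundary_complement src dst S] ->
  joins e u v -> u \in A -> v \in boundary_complement src dst S ->
  v \in S /\ v \in boundary src dst S.
Proof.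
move=> sAS disA euv Au Bv.
have Sv : v \in S.
  apply/negPn/negP => nSv.
  have bdu := joins_boundary euv (subsetP sAS u Au) nSv.
  by have := disjointFr disA Au; rewrite in_setU bdu orbT.
by split=> //; move: Bv; rewrite /boundary_complement in_setU in_setC Sv.
Qed.

End Boundary.

Theorem proposition3 (R : realDomainType) (V L Ed : finType)
  (src dst : Ed -> V) (X : V -> {set L})
  (thu : V -> L -> R) (thp : Ed -> L -> L -> R)
  (A B A' : {set V}) (x' x'' : V -> L) :
  simple_graph src dst ->
  (* A, B is a partition of G *)
  [disjoint A & B] -> A :|: B = setT ->
  (* B is boundary complement to A' *)
  B = boundary_complement src dst A' ->
  (* V_A \subseteq V_A' \subseteq SAC(theta) *)
  A \subset A' ->
  (forall u, u \in A' -> strictly_arc_consistent src dst X thu thp u) ->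
  is_argmin src dst X thu thp A' x' ->
  is_argmin src dst X thu thp B x'' ->
  (forall v, v \in boundary src dst A' -> x' v = x'' v) ->
  is_argmin src dst X thu thp A x' /\
  (forall e : Ed,
     (src e \in A -> dst e \in B ->
        is_argmin_pair src dst X thp e (x' (src e)) (x'' (dst e))) /\
     (dst e \in A -> src e \in B ->
        is_argmin_pair src dst X thp e (x'' (src e)) (x' (dst e)))).
Proof.
move=> _ disAB _ defB; subst B => sAA' sacA' argx' _ bd.
have minx' := sac_argmin_termwise_minimal sacA' argx'.
split; first exact/termwise_minimal_is_argmin/(termwise_minimal_subset sAA' minx').
have [_ min_e] := minx'.
move=> e; split=> Au Bv.
- have [A'v bdv] := joins_cross_boundary sAA' disAB (joins_src_dst _ _ e) Au Bv.
  by rewrite -bd //; apply/strict_argmin_pairW/min_e => //; exact: (subsetP sAA').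
- have joins_e : joins src dst e (dst e) (src e) by rewrite joinsC joins_src_dst.
  have [A'v bdv] := joins_cross_boundary sAA' disAB joins_e Au Bv.
  by rewrite -bd //; apply/strict_argmin_pairW/min_e => //; exact: (subsetP sAA').
Qed.
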